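(* The $d\times(d-1)$ matrix $B=M^+\bigl((F'_p)^2\bigr)-M^+(F)\bigl(M^-(F)\bigr)^{-1}M^-\bigl((F'_p)^2\bigr)$ is expressed in terms of the coefficients $a_i$ alone (without their derivatives) and has maximal rank $d-1$ (at every point of $U$).
   Context: Let $d\ge 3$, let $U\subset\mathbb{C}^2$ be open with coordinates $(x,y)$, and let $F(x,y,p)=\sum_{i=0}^d a_i(x,y)p^{d-i}$ with $a_i$ holomorphic on $U$, $a_0\equiv1$, such that $F(x,y,p)=\prod_{i=1}^d(p-p_i(x,y))$ with holomorphic $p_i$ pairwise distinct at every point of $U$. A polynomial $P=\sum_{i=0}^k g_ip^i$ with holomorphic coefficients is identified with the column vector $(g_0,\dots,g_k)^T$. For such $P$ (of formal degree $\le k$) and an integer $h\ge 0$, $M(P)$ denotes the $(h+k+1)\times(h+1)$ matrix of multiplication by $P$ from polynomials of degree $\le h$ to polynomials of degree $\le h+k$: its entry in row $i$, column $j$ (indices starting at $0$) is $g_{i-j}$ if $0\le i-j\le k$ and $0$ otherwise. Here $M(F)$ is taken of size $(3d-3)\times(2d-3)$ (i.e. $h=2d-4$) and $M((F'_p)^2)$ of size $(3d-3)\times(d-1)$ (i.e. $h=d-2$). For a matrix $X$ with $3d-3$ rows, $X^+$ denotes the submatrix formed by its first $d$ rows and $X^-$ the submatrix formed by its last $2d-3$ rows; $M^-(F)$ is triangular with ones on the diagonal, hence invertible. *)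

From HB Require Import structures.
From mathcomp Require Import all_boot all_order all_algebra.
From mathcomp Require Import complex.
From mathcomp Require Import mpoly.
Set Implicit Arguments. Unset Strict Implicit. Unset Printing Implicit Defensive.
Import Order.TTheory GRing.Theory Num.Theory.
Local Open Scope ring_scope.

Section Defs.
Variable C : comRingType.

Definition Fpoly (d : nat) (a : 'I_d.+1 -> C) : {poly C} :=
  \sum_(i < d.+1) a i *: 'X^(d - i).

(* M(P) : matrix of multiplication by P (formal degree <= k), of size m x n
   (m = h+k+1, n = h+1): entry (i,j) is g_{i-j} if 0 <= i-j <= k, else 0. *)
Definition Mmul (m n k : nat) (P : {poly C}) : 'M[C]_(m, n) :=
  \matrix_(i < m, j < n) (if (j <= i)%N && (i - j <= k)%N then P`_(i - j) else 0).

Definition mx_at (m n : nat) (X : 'M[C]_(m, n)) (i : nat) (j : 'I_n) : C :=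
  if insub i is Some i' then X i' j else 0.

Definition Mplus (d : nat) (m n : nat) (X : 'M[C]_(m, n)) : 'M[C]_(d, n) :=
  \matrix_(i < d, j < n) mx_at X i j.

Definition Mminus (d r : nat) (m n : nat) (X : 'M[C]_(m, n)) : 'M[C]_(r, n) :=
  \matrix_(i < r, j < n) mx_at X (i + d) j.
End Defs.

Section Bmat.
Variable C : fieldType.
Definition Bmat (d : nat) (a : 'I_d.+1 -> C) : 'M[C]_(d, d - 1) :=
  let F := Fpoly a in
  let MF := Mmul (3 * d - 3) (2 * d - 3) d F in
  let MG := Mmul (3 * d - 3) (d - 1) (2 * d - 2) (F^`() ^+ 2) in
  Mplus d MG - Mplus d MF *m invmx (Mminus d (2 * d - 3) MF) *m Mminus d (2 * d - 3) MG.
End Bmat.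

From HB Require Import structures.
From mathcomp Require Import all_boot all_order all_algebra.
From mathcomp Require Import complex.
From mathcomp Require Import mpoly.
From mathcomp Require Import separable.
From mathcomp Require Import zify.
Import Order.TTheory GRing.Theory Num.Theory.
Local Open Scope ring_scope.
Set Implicit Arguments. Unset Strict Implicit.

(* M^-(F) is triangular with diagonal a_0 = 1, so its inverse is its adjugate
   and B is a polynomial matrix in the a_i.  For the rank, read column vectors
   as coefficient vectors of polynomials: M(P) becomes multiplication by P.  If
   B w = 0, then x = -(M^-(F))^-1 M^-((F'_p)^2) w makes M(F) x + M((F'_p)^2) w
   vanish, i.e. F u + (F'_p)^2 v = 0 with deg v < d - 1.  As F has simple
   roots it is coprime to (F'_p)^2, so F divides v; hence v = 0 and w = 0. *)

Section RowBlocks.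
Variable C : comNzRingType.

Lemma MplusE d m n (X : 'M[C]_(m, n)) : Mplus d X = Mminus 0 d X.
Proof. by apply/matrixP => i j; rewrite !mxE addn0. Qed.

Lemma MminusE d r m n (X : 'M[C]_(m, n)) :
  Mminus d r X = \matrix_(i < r, j < m) ((i + d)%N == j)%:R *m X.
Proof.
apply/matrixP => i k; rewrite !mxE /mx_at; case: insubP => [i' _ ei|him].
  rewrite (bigD1 i') //= mxE ei eqxx mul1r big1 ?addr0 // => j nj.
  rewrite mxE -ei; case: eqP => [/val_inj eij|_]; last by rewrite mul0r.
  by rewrite eij eqxx in nj.
rewrite big1 // => j _; rewrite mxE.
by case: eqP => [ij|]; [move: him; rewrite ij ltn_ord | rewrite mul0r].
Qed.

Lemma Mminus_mulmx d r m n p (X : 'M[C]_(m, n)) (Y : 'M[C]_(n, p)) :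
  Mminus d r (X *m Y) = Mminus d r X *m Y.
Proof. by rewrite !MminusE mulmxA. Qed.

Lemma Mminus_add d r m n (X Y : 'M[C]_(m, n)) :
  Mminus d r (X + Y) = Mminus d r X + Mminus d r Y.
Proof. by rewrite !MminusE mulmxDr. Qed.

Lemma Mplus_mulmx d m n p (X : 'M[C]_(m, n)) (Y : 'M[C]_(n, p)) :
  Mplus d (X *m Y) = Mplus d X *m Y.
Proof. by rewrite !MplusE Mminus_mulmx. Qed.

Lemma Mplus_add d m n (X Y : 'M[C]_(m, n)) : Mplus d (X + Y) = Mplus d X + Mplus d Y.
Proof. by rewrite !MplusE Mminus_add. Qed.

Lemma Mplus_Mminus_eq0 d r m n (X : 'M[C]_(m, n)) : (m <= d + r)%N ->
  Mplus d X = 0 -> Mminus d r X = 0 -> X = 0.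
Proof.
move=> hm Xp Xm; apply/matrixP => i j; rewrite mxE.
have [hid|hdi] := ltnP i d.
  have := congr1 (fun Y : 'M_(d, n) => Y (Ordinal hid) j) Xp.
  by rewrite !mxE /mx_at valK.
have hir : (i - d < r)%N by have := ltn_ord i; lia.
have := congr1 (fun Y : 'M_(r, n) => Y (Ordinal hir) j) Xm.
by rewrite !mxE /mx_at /= subnK // valK.
Qed.

Lemma rVpoly_Mmul m n k (P : {poly C}) (y : 'cV[C]_n) :
  (size P <= k.+1)%N -> (n + k <= m)%N ->
  rVpoly (Mmul m n k P *m y)^T = P * rVpoly y^T.
Proof.
move=> sP hm; apply/polyP => i.
have sy : (size (rVpoly y^T) <= n)%N := size_poly _ _.
have [him|hmi] := ltnP i m; last first.
  rewrite nth_default ?(leq_trans (size_poly _ _) hmi) // nth_default //.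
  by apply: leq_trans (size_polyMleq _ _) _; lia.
have -> : rVpoly y^T = \sum_(j < n) y j 0 *: 'X^j.
  by rewrite /rVpoly poly_def; apply: eq_bigr => j _; rewrite valK mxE.
rewrite coef_rVpoly insubT /= !mxE mulr_sumr coef_sum; apply: eq_bigr => j _.
rewrite -scalerAr coefZ coefMXn !mxE mulrC ltnNge.
case: (j <= i)%N => //=; case: leqP => // hk.
by rewrite nth_default ?mul0r // (leq_trans sP).
Qed.

Lemma det_Mminus_Mmul m r k (P : {poly C}) : (r + k <= m)%N ->
  \det (Mminus k r (Mmul m r k P)) = P`_k ^+ r.
Proof.
move=> hm; rewrite -det_tr det_trig.
  rewrite -[X in _ ^+ X]card_ord -prodr_const; apply: eq_bigr => i _.
  rewrite !mxE /mx_at insubT; first by have := ltn_ord i; lia.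
  by move=> ? /=; rewrite mxE leq_addr addKn leqnn.
apply/forallP => i; apply/forallP => j; apply/implyP => hij; apply/eqP.
rewrite !mxE /mx_at; case: insubP => [l _ El|] //.
rewrite mxE El; case: ifP => // /andP[]; lia.
Qed.
End RowBlocks.

Section Fpoly.
Variable C : comNzRingType.

Lemma FpolyE d (a : 'I_d.+1 -> C) : Fpoly a = \poly_(k < d.+1) a (inord (d - k)).
Proof.
rewrite /Fpoly poly_def (reindex_inj rev_ord_inj) /=; apply: eq_bigr => k _.
rewrite subKn ?leq_ord //; congr (a _ *: _); apply: val_inj.
by rewrite /= inordK // ltnS leq_subr.
Qed.

Lemma coef_Fpoly_lead d (a : 'I_d.+1 -> C) : (Fpoly a)`_d = a ord0.
Proof. by rewrite FpolyE coef_poly ltnSn subnn (inord_val ord0). Qed.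

Lemma size_Fpoly d (a : 'I_d.+1 -> C) : a ord0 = 1 -> size (Fpoly a) = d.+1.
Proof.
by move=> a0; rewrite FpolyE size_poly_eq //= subnn (inord_val ord0) a0 oner_neq0.
Qed.

Lemma map_Fpoly (C' : comNzRingType) (f : {rmorphism C -> C'}) d (a : 'I_d.+1 -> C) :
  map_poly f (Fpoly a) = Fpoly (fun i => f (a i)).
Proof.
by rewrite /Fpoly rmorph_sum; apply: eq_bigr => i _; rewrite /= map_polyZ map_polyXn.
Qed.
End Fpoly.

Section Morphisms.
Variables (C C' : comNzRingType) (f : {rmorphism C -> C'}).

Lemma map_Mminus d r m n (X : 'M[C]_(m, n)) :
  map_mx f (Mminus d r X) = Mminus d r (map_mx f X).
Proof.
rewrite !MminusE map_mxM; congr (_ *m _).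
by apply/matrixP => i j; rewrite !mxE rmorph_nat.
Qed.

Lemma map_Mplus d m n (X : 'M[C]_(m, n)) : map_mx f (Mplus d X) = Mplus d (map_mx f X).
Proof. by rewrite !MplusE map_Mminus. Qed.

Lemma map_Mmul m n k (P : {poly C}) : map_mx f (Mmul m n k P) = Mmul m n k (map_poly f P).
Proof.
apply/matrixP => i j; rewrite !mxE; case: ifP => _; first by rewrite coef_map.
by rewrite rmorph0.
Qed.
End Morphisms.

Definition Bmat_adj (C : comNzRingType) d (F : {poly C}) : 'M[C]_(d, d - 1) :=
  let MF := Mmul (3 * d - 3) (2 * d - 3) d F in
  let MG := Mmul (3 * d - 3) (d - 1) (2 * d - 2) (F^`() ^+ 2) in
  Mplus d MG - Mplus d MF *m \adj (Mminus d (2 * d - 3) MF) *m Mminus d (2 * d - 3) MG.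

Lemma map_Bmat_adj (C C' : comNzRingType) (f : {rmorphism C -> C'}) d (F : {poly C}) :
  map_mx f (Bmat_adj d F) = Bmat_adj d (map_poly f F).
Proof.
rewrite map_mxB !map_mxM map_mx_adj !map_Mplus !map_Mminus !map_Mmul.
by rewrite rmorphXn /= -deriv_map.
Qed.

Section Field.
Variable C : fieldType.

Lemma det_Mminus_Mmul_Fpoly d (a : 'I_d.+1 -> C) : (1 < d)%N -> a ord0 = 1 ->
  \det (Mminus d (2 * d - 3) (Mmul (3 * d - 3) (2 * d - 3) d (Fpoly a))) = 1.
Proof. by move=> hd a0; rewrite det_Mminus_Mmul ?coef_Fpoly_lead ?a0 ?expr1n //; lia. Qed.

Lemma Bmat_adjE d (a : 'I_d.+1 -> C) : (1 < d)%N -> a ord0 = 1 ->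
  Bmat a = Bmat_adj d (Fpoly a).
Proof.
move=> hd a0; rewrite /Bmat /invmx unitmxE det_Mminus_Mmul_Fpoly //.
by rewrite unitr1 invr1 scale1r.
Qed.

Lemma Bmat_mulmx_eq0 d (a : 'I_d.+1 -> C) (w : 'cV[C]_(d - 1)) :
  (1 < d)%N -> a ord0 = 1 -> separable_poly (Fpoly a) -> Bmat a *m w = 0 -> w = 0.
Proof.
move=> hd a0 sepF Bw; rewrite unlock in sepF.
set F := Fpoly a in sepF; set G := F^`() ^+ 2.
set MF := Mmul (3 * d - 3) (2 * d - 3) d F.
set MG := Mmul (3 * d - 3) (d - 1) (2 * d - 2) G.
have sF : size F = d.+1 by apply: size_Fpoly.
have sG : (size G <= (2 * d - 2).+1)%N.
  apply: leq_trans (size_poly_exp_leq _ _) _.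
  have : (size F^`() < size F)%N by rewrite lt_size_deriv // -size_poly_eq0 sF.
  by rewrite sF; lia.
have MFunit : Mminus d (2 * d - 3) MF \in unitmx.
  by rewrite unitmxE det_Mminus_Mmul_Fpoly ?unitr1.
pose x := - (invmx (Mminus d (2 * d - 3) MF) *m (Mminus d (2 * d - 3) MG *m w)).
have MFxG : MF *m x + MG *m w = 0.
  apply: (@Mplus_Mminus_eq0 _ d (2 * d - 3)); first lia.
    rewrite Mplus_add !Mplus_mulmx -Bw /Bmat -/F -/MF -/G -/MG /x.
    by rewrite mulmxN mulmxBl !mulmxA addrC.
  rewrite Mminus_add !Mminus_mulmx /x mulmxN !mulmxA mulmxV // mul1mx.
  by rewrite addNr.
have FuGv : F * rVpoly x^T + G * rVpoly w^T = 0.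
  rewrite -(@rVpoly_Mmul _ (3 * d - 3) _ d) ?sF //; last lia.
  rewrite -(@rVpoly_Mmul _ (3 * d - 3) _ (2 * d - 2)) //; last lia.
  by rewrite -linearD -linearD /= MFxG trmx0 linear0.
have F_dvd_v : F %| rVpoly w^T.
  rewrite -(Gauss_dvdpr _ (coprimep_expr 2 sepF)) -/G.
  have -> : G * rVpoly w^T = F * - rVpoly x^T.
    by apply/eqP; rewrite mulrN -addr_eq0 addrC FuGv.
  exact: dvdp_mulIl.
have v0 : rVpoly w^T = 0.
  apply/eqP; apply: contraTT F_dvd_v => v_neq0; apply/negP => /(dvdp_leq v_neq0).
  have sv : (size (rVpoly w^T) <= d - 1)%N := size_poly _ _.
  by rewrite sF => /leq_trans/(_ sv); lia.
by apply: trmx_inj; rewrite trmx0; apply: (can_inj rVpolyK); rewrite v0 linear0.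
Qed.
End Field.

Lemma inj_mxrank (C : fieldType) m n (A : 'M[C]_(m, n)) :
  (forall w : 'cV_n, A *m w = 0 -> w = 0) -> \rank A = n.
Proof.
move=> Ainj; rewrite -mxrank_tr; apply/eqP/inj_row_free => v vA0.
by apply: trmx_inj; rewrite trmx0; apply: Ainj; rewrite -[A]trmxK -trmx_mul vA0 trmx0.
Qed.

Lemma separable_prod_XsubC_inj (R : idomainType) n (p : 'I_n -> R) :
  injective p -> separable_poly (\prod_(i < n) ('X - (p i)%:P)).
Proof.
move=> p_inj; have := separable_prod_XsubC (map p (index_enum 'I_n)).
by rewrite map_inj_uniq ?index_enum_uniq // big_map unlock.
Qed.

Unset Implicit Arguments.

Theorem lemma2 (R : rcfType) (d : nat) (hd : (3 <= d)%N) :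
  (* B is given by polynomial expressions in the coefficients a_0, ..., a_d only *)
  (exists P : 'M[{mpoly R[i][d.+1]}]_(d, d - 1),
     forall a : 'I_d.+1 -> R[i], a ord0 = 1 ->
       Bmat a = map_mx (fun q => q.@[a]) P)
  /\
  (* and, at every point, B has maximal rank d - 1 *)
  (forall a : 'I_d.+1 -> R[i], a ord0 = 1 ->
     (exists p : 'I_d -> R[i], injective p /\
        Fpoly a = \prod_(i < d) ('X - (p i)%:P)) ->
     \rank (Bmat a) = (d - 1)%N).
Proof.
have hd1 : (1 < d)%N by lia.
split=> [|a a0 [p [p_inj Fp]]].
  exists (Bmat_adj d (Fpoly (fun i => 'X_i))) => a a0.
  rewrite (Bmat_adjE hd1 a0) (map_Bmat_adj (meval a)) map_Fpoly.
  by congr (Bmat_adj d _); apply: eq_bigr => i _; rewrite /= mevalXU.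
apply: inj_mxrank => w; apply: Bmat_mulmx_eq0 => //.
by rewrite Fp; apply: separable_prod_XsubC_inj.
Qed.
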